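(* Let $\phi\ge1$ and let $w_1,\ldots,w_n$ be independent random variables, each $w_i$ uniformly distributed on an arbitrary interval $A_i\subseteq[0,1]$ of length $1/\phi$. For $k\in\mathbb{N}$ let $\mathcal{F}_k$ denote the event that there exist two different vectors $x,y\in\{0,1\}^n$ with $|w^{\mathsf T}x-w^{\mathsf T}y|\le n/k$. Then for every $k\in\mathbb{N}$, $\Pr[\mathcal{F}_k]\le \frac{2^{2n+1}n\phi}{k}$. *)

From HB Require Import structures.
From mathcomp Require Import all_boot all_order all_algebra.
From mathcomp Require Import all_classical all_reals all_analysis.
Set Implicit Arguments. Unset Strict Implicit. Unset Printing Implicit Defensive.
Import Order.TTheory GRing.Theory Num.Theory.
Local Open Scope classical_set_scope.
Local Open Scope ring_scope.

(* Mutual independence of a finite family X_0, ..., X_{n-1} of real random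
   variables: for all Borel sets B_0, ..., B_{n-1},
   P(X_0 \in B_0, ..., X_{n-1} \in B_{n-1}) = prod_i P(X_i \in B_i).
   (Subfamilies are covered by taking B_i = setT.) *)
Definition mutually_independent d (T : measurableType d) (R : realType)
    (P : probability T R) (n : nat) (X : 'I_n -> T -> R) : Prop :=
  forall B : 'I_n -> set R, (forall i, measurable (B i)) ->
    P (\bigcap_(i in [set: 'I_n]) (X i @^-1` B i)) =
    (\prod_(i < n) P (X i @^-1` B i))%E.

(* X is uniformly distributed on the interval [a, b] (a < b assumed separately):
   its law has density uniform_pdf a b w.r.t. Lebesgue measure. *)
Definition uniform_on d (T : measurableType d) (R : realType)
    (P : probability T R) (X : T -> R) (a b : R) : Prop :=
  forall B : set R, measurable B ->
    P (X @^-1` B) = (\int[lebesgue_measure]_(x in B) (uniform_pdf a b x)%:E)%E.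

Definition dotb (R : realType) (n : nat) (w : 'I_n -> R) (x : 'I_n -> bool) : R :=
  \sum_(i < n) w i * (x i)%:R.

Definition event_F d (T : measurableType d) (R : realType) (n k : nat)
    (w : 'I_n -> T -> R) : set T :=
  [set t | exists x y : 'I_n -> bool, x <> y /\
      `| dotb (fun i => w i t) x - dotb (fun i => w i t) y | <= n%:R / k%:R].

From HB Require Import structures.
From mathcomp Require Import all_boot all_order all_algebra.
From mathcomp Require Import all_classical all_reals all_analysis.
From mathcomp Require Import lra.
Import Order.TTheory GRing.Theory Num.Theory.
Local Open Scope classical_set_scope.
Local Open Scope ring_scope.

(* Fix x <> y, a coordinate i with x_i <> y_i, and z = x - y, so that the
   event reads |sum_j z_j w_j| <= n/k.  Once the coordinates j <> i are known,
   w_i is confined to a window of length 2n/k around the value that cancels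
   the sum, and the density of w_i is at most phi there; a union bound over
   the 4^n pairs (x, y) then gives the claim.  To condition without
   conditional laws, the coordinates j <> i are rounded down to a grid of
   mesh 1/N: the event is covered by boxes "grid cell for each j <> i, window
   of length 2(n/k + n/N) for w_i", independence factorises the probability
   of each box, the cell probabilities of each w_j sum to at most 1, and
   N -> oo removes the rounding error. *)

Definition pivot {R : fieldType} {n : nat} (z u : 'I_n -> R) (i : 'I_n) : R :=
  - (z i)^-1 * \sum_(j | j != i) u j * z j.

Lemma dist_pivot_le (R : numFieldType) (n : nat) (z v u : 'I_n -> R) (i : 'I_n)
    (M e : R) :
  1 <= `|z i| -> (forall j, `|z j| <= 1) -> 0 <= e ->
  (forall j, j != i -> `|v j - u j| <= e) ->
  `|\sum_j v j * z j| <= M -> `|v i - pivot z u i| <= M + n%:R * e.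
Proof.
move=> zi1 z1 e0 vu vzM.
have zi0 : z i != 0 by rewrite -normr_eq0 gt_eqF // (lt_le_trans ltr01).
have scaled : z i * (v i - pivot z u i) =
    \sum_j v j * z j - \sum_(j | j != i) (v j - u j) * z j.
  rewrite (bigD1 i) //= -addrA -sumrB /pivot mulrBr mulNr mulrN opprK mulrA.
  rewrite mulfV // mul1r mulrC; congr (_ + _); apply: eq_bigr => j _.
  by rewrite mulrBl opprB addrCA subrr addr0.
apply: le_trans (_ : `|z i * (v i - pivot z u i)| <= _).
  by rewrite normrM ler_peMl.
rewrite scaled; apply: le_trans (ler_normB _ _) _; apply: lerD => //.
apply: le_trans (ler_norm_sum _ _ _) _.
apply: le_trans (_ : \sum_(j | j != i) e <= _).
  apply: ler_sum => j ji; rewrite normrM.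
  by rewrite (le_trans (ler_wpM2l (normr_ge0 _) (z1 j))) // mulr1 vu.
rewrite sumr_const -[e *+ _]mulr_natl; apply: ler_wpM2r => //; rewrite ler_nat.
by rewrite (leq_trans (max_card _)) ?card_ord.
Qed.

Lemma ler_of_add_div_nat (R : archiRealFieldType) (x y C : R) :
  (forall N, (0 < N)%N -> x <= y + C / N%:R) -> x <= y.
Proof.
move=> xle; apply/ler_addgt0Pr => e e_gt0.
pose N := (Num.truncn (C / e)).+1.
have N_gt0 : (0 : R) < N%:R by rewrite ltr0n.
apply: le_trans (xle N isT) _; rewrite lerD2l ler_pdivrMr // mulrC.
by rewrite -ler_pdivrMr // ltW // truncnS_gt.
Qed.

Section cells.
Context {R : archiRealFieldType}.

Definition cell (N t : nat) : set R := `[t%:R / N%:R, t.+1%:R / N%:R[%classic.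

Lemma cellP (N t : nat) (v : R) : (0 < N)%N ->
  cell N t v <-> 0 <= v /\ Num.truncn (v * N%:R) = t.
Proof.
move=> N_gt0; have N_gt0' : (0 : R) < N%:R by rewrite ltr0n.
rewrite /cell /= in_itv /= ler_pdivrMr // ltr_pdivlMr //.
split=> [/andP[lev ltv]|[v_ge0 <-]]; last exact/truncn_itv/mulr_ge0.
split; last exact/truncn_def/andP.
by rewrite -(pmulr_lge0 _ N_gt0') (le_trans _ lev).
Qed.

Lemma trivIset_cell (N m : nat) : (0 < N)%N ->
  trivIset [set: 'I_m] (fun t : 'I_m => cell N t : set R).
Proof.
move=> N_gt0 s t _ _ [v [/cellP-/(_ N_gt0)[_ vs] /cellP-/(_ N_gt0)[_ vt]]].
by apply: val_inj; rewrite /= -vs -vt.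
Qed.

Lemma truncn_scale_lt (N : nat) (v : R) :
  v <= 1 -> (Num.truncn (v * N%:R) < N.+1)%N.
Proof.
move=> v_le1; rewrite ltnS truncn_le_nat (@le_lt_trans _ _ N%:R) ?ltr_nat //.
by rewrite -[leRHS]mul1r ler_wpM2r.
Qed.

Lemma dist_truncn_scale_le (N : nat) (v : R) : (0 < N)%N -> 0 <= v ->
  `|v - (Num.truncn (v * N%:R))%:R / N%:R| <= N%:R^-1.
Proof.
move=> N_gt0 v_ge0; have N_gt0' : (0 : R) < N%:R by rewrite ltr0n.
have /andP[lev ltv] := truncn_itv (mulr_ge0 v_ge0 (ltW N_gt0')).
set k := Num.truncn _ in lev ltv *.
have N_inv_ge0 : (0 : R) <= N%:R^-1 by rewrite invr_ge0 ltW.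
rewrite -[v](mulfK (lt0r_neq0 N_gt0')) -mulrBl normrM (ger0_norm N_inv_ge0).
rewrite ger0_norm ?subr_ge0 // -[leRHS]mul1r ler_wpM2r //.
by rewrite lerBlDl natr1 ltW.
Qed.

End cells.

Lemma dotbB (R : realType) (n : nat) (v : 'I_n -> R) (x y : 'I_n -> bool) :
  dotb v x - dotb v y = \sum_j v j * ((x j)%:R - (y j)%:R).
Proof. by rewrite /dotb -sumrB; apply: eq_bigr => j _; rewrite mulrBr. Qed.

Lemma norm_natrb_sub_le1 (R : numDomainType) (b c : bool) :
  `|b%:R - c%:R : R| <= 1.
Proof.
by case: b; case: c; rewrite /= ?subr0 ?sub0r ?subrr ?normrN ?normr1 ?normr0.
Qed.

Lemma norm_natrb_sub_neq (R : numDomainType) (b c : bool) :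
  b != c -> `|b%:R - c%:R : R| = 1.
Proof. by case: b; case: c; rewrite //= ?subr0 ?sub0r ?normrN normr1. Qed.

Section probability.
Context {R : realType} {d : measure_display} {T : measurableType d}.
Variable P : probability T R.

Lemma measure_le_sum_cover (I : finType) (A : set T) (F : I -> set T) :
  measurable A -> (forall i, measurable (F i)) -> A `<=` \bigcup_i F i ->
  (P A <= \sum_i P (F i))%E.
Proof.
move=> mA mF AF.
have := content_sub_fsum P finite_finset (fun i _ => mF i) mA AF.
rewrite (fsbigE (enum I)) ?enum_uniq //; last by move=> i _; rewrite mem_enum.
by under eq_bigl do rewrite in_setT; rewrite big_enum.
Qed.

Lemma fine_probabilityK {A : set T} : measurable A -> (fine (P A))%:E = P A.
Proof. by move=> mA; rewrite fineK // fin_num_measure. Qed.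

Lemma sum_prob_trivIset_le1 (m : nat) (X : {RV P >-> R}) (S : 'I_m -> set R) :
  (forall t, measurable (S t)) -> trivIset [set: 'I_m] S ->
  (\sum_(t < m) P (X @^-1` S t) <= 1)%E.
Proof.
move=> mS tS; have mXS t : measurable (X @^-1` S t) by exact: measurable_funPTI.
have mU : measurable (\big[setU/set0]_(t < m) X @^-1` S t).
  by apply: bigsetU_measurable => t _.
rewrite -measure_semi_additive_ord //; first exact: probability_le1.
by move=> s t _ _ [v [/= Sv Tv]]; apply: tS => //; exists (X v).
Qed.

Lemma uniform_pdf_le (a b x : R) : a < b -> uniform_pdf a b x <= (b - a)^-1.
Proof.
by move=> ab; rewrite /uniform_pdf; case: ifP => _ //; rewrite invr_ge0 subr_ge0 ltW.
Qed.

Lemma uniform_on_itv_le {X : {RV P >-> R}} {a b u v : R} :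
  a < b -> uniform_on P X a b -> u <= v ->
  (P (X @^-1` `[u, v]%classic) <= ((v - u) / (b - a))%:E)%E.
Proof.
move=> ab unifX uv; rewrite unifX; last exact: measurable_itv.
apply: le_trans (_ : (\int[lebesgue_measure]_(x in `[u, v]) (b - a)^-1%:E <= _)%E).
  apply: ge0_le_integral => //.
  - by move=> x _; rewrite lee_fin uniform_pdf_ge0.
  - apply/measurable_realfun.measurable_EFinP.
    exact: measurable_funS (measurable_uniform_pdf _ _).
  - by move=> x _; rewrite lee_fin uniform_pdf_le.
rewrite integral_cst //= lebesgue_measure_itv /=; case: ifP => _.
  by rewrite -EFinD -EFinM mulrC.
by rewrite mule0 lee_fin divr_ge0 ?subr_ge0 // ltW.
Qed.

Lemma uniform_on_null {X : {RV P >-> R}} {a b : R} {B : set R} :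
  uniform_on P X a b -> measurable B -> B `<=` ~` `[a, b]%classic ->
  P (X @^-1` B) = 0%E.
Proof.
move=> unifX mB Bab; rewrite unifX //; apply: integral0_eq => x /Bab abx.
by rewrite /uniform_pdf; case: ifP => // abx'; exfalso; apply: abx; rewrite /= in_itv.
Qed.

Lemma prob_bigcup_boxes_le {n m : nat} {X : 'I_n -> {RV P >-> R}}
    {B : {ffun 'I_n -> 'I_m} -> 'I_n -> set R} {q : 'I_n -> 'I_m -> R} :
  mutually_independent P (fun j => X j : T -> R) ->
  (forall c j, measurable (B c j)) ->
  (forall c j, (P (X j @^-1` B c j) <= (q j (c j))%:E)%E) ->
  (P (\bigcup_c \bigcap_j X j @^-1` B c j) <= (\prod_j \sum_t q j t)%:E)%E.
Proof.
move=> indepX mB PBq.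
have mXB c j : measurable (X j @^-1` B c j) by exact: measurable_funPTI.
have mbox c : measurable (\bigcap_j X j @^-1` B c j).
  exact: fin_bigcap_measurable.
have mU : measurable (\bigcup_c \bigcap_j X j @^-1` B c j).
  exact: fin_bigcup_measurable.
apply: le_trans (measure_le_sum_cover _ _ _ mU mbox (@subset_refl _ _)) _.
rewrite bigA_distr_bigA -sumEFin; apply: lee_sum => c _.
rewrite indepX // -(eq_bigr _ (fun j _ => fine_probabilityK (mXB c j))) prodEFin.
rewrite lee_fin; apply: ler_prod => j _; rewrite fine_ge0 ?measure_ge0 //=.
by rewrite -lee_fin fine_probabilityK.
Qed.

Definition comb_le {n : nat} (w : 'I_n -> {RV P >-> R}) (z : 'I_n -> R) (M : R) :
    set T :=
  [set t | `|\sum_j w j t * z j| <= M].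

Lemma measurable_comb_le {n : nat} (w : 'I_n -> {RV P >-> R}) z M :
  measurable (comb_le w z M).
Proof.
have mcomb : measurable_fun setT (fun t => \sum_j w j t * z j).
  apply: measurable_sum => j; apply: measurable_realfun.measurable_funM.
    exact: measurable_funPT.
  exact: measurable_cst.
have -> : comb_le w z M = (fun t => \sum_j w j t * z j) @^-1` `[-M, M]%classic.
  by apply/seteqP; split=> t; rewrite /comb_le /= in_itv /= ler_norml.
by rewrite -[X in measurable X]setTI; apply: mcomb => //; exact: measurable_itv.
Qed.

Section anti_concentration.
Variables (n : nat) (w : 'I_n -> {RV P >-> R}) (phi : R) (a : 'I_n -> R).
Hypothesis phi_gt0 : 0 < phi.
Hypothesis supp_w : forall j, 0 <= a j /\ a j + phi^-1 <= 1.
Hypothesis indep_w : mutually_independent P (fun j => w j : T -> R).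
Hypothesis unif_w : forall j, uniform_on P (w j) (a j) (a j + phi^-1).

Lemma prob_itv_le (j : 'I_n) (u v : R) :
  u <= v -> (P (w j @^-1` `[u, v]%classic) <= ((v - u) * phi)%:E)%E.
Proof.
move=> uv; have a_lt : a j < a j + phi^-1 by rewrite ltrDl invr_gt0.
by have := uniform_on_itv_le a_lt (unif_w j) uv; rewrite addrAC subrr add0r invrK.
Qed.

Lemma prob_outside_unit_itv : P (\bigcup_j w j @^-1` ~` `[0, 1]%classic) = 0%E.
Proof.
have mout : measurable (~` `[0, 1]%classic : set R).
  by apply: measurableC; exact: measurable_itv.
apply/eqP; rewrite -measure_le0.
have mU : measurable (\bigcup_j w j @^-1` ~` `[0, 1]%classic).
  by apply: fin_bigcup_measurable => // j _; exact: measurable_funPTI.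
apply: le_trans (measure_le_sum_cover _ _ _ mU _ (@subset_refl _ _)) _.
  by move=> j; exact: measurable_funPTI.
rewrite big1 // => j _; have [a_ge0 a_le1] := supp_w j.
apply: uniform_on_null (unif_w j) mout _ => v /= out01.
rewrite in_itv /= => /andP[av va]; apply: out01.
by rewrite /= in_itv /= (le_trans a_ge0 av) (le_trans va a_le1).
Qed.

Section discretization.
Variables (z : 'I_n -> R) (i : 'I_n) (M : R) (N : nat).
Hypotheses (zi_ge1 : 1 <= `|z i|) (z_le1 : forall j, `|z j| <= 1).
Hypotheses (M_ge0 : 0 <= M) (N_gt0 : (0 < N)%N).

Definition grid_point (c : {ffun 'I_n -> 'I_N.+1}) (j : 'I_n) : R := (c j)%:R / N%:R.

(* The coordinate [c i] is a dummy: the window is attached to [c i = ord0]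
   only, so that the sum over [c] does not count it [N.+1] times. *)
Definition box (c : {ffun 'I_n -> 'I_N.+1}) (j : 'I_n) : set R :=
  if j != i then cell N (c j)
  else if c i == ord0 then
    `[pivot z (grid_point c) i - (M + n%:R / N%:R),
      pivot z (grid_point c) i + (M + n%:R / N%:R)]%classic
  else set0.

Definition box_bound (j : 'I_n) (t : 'I_N.+1) : R :=
  if j != i then fine (P (w j @^-1` cell N t))
  else (t == ord0)%:R * (2 * (M + n%:R / N%:R) * phi).

Lemma measurable_box c j : measurable (box c j).
Proof.
rewrite /box; case: ifP => _; first exact: measurable_itv.
by case: ifP => _; [exact: measurable_itv|exact: measurable0].
Qed.

Lemma comb_le_sub_boxes :
  comb_le w z M `<=` (\bigcup_c \bigcap_j w j @^-1` box c j) `|`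
                     \bigcup_j w j @^-1` ~` `[0, 1]%classic.
Proof.
move=> t comb_t.
have [|in01] := pselect ((\bigcup_j w j @^-1` ~` `[0, 1]%classic) t).
  by right.
left.
have w01 j : 0 <= w j t <= 1.
  by apply: contrapT => out01; apply: in01; exists j => //=; rewrite in_itv.
pose c : {ffun 'I_n -> 'I_N.+1} :=
  [ffun j => if j == i then ord0 else inord (Num.truncn (w j t * N%:R))].
have cE j : j != i -> c j = Num.truncn (w j t * N%:R) :> nat.
  move=> ji; rewrite ffunE (negbTE ji) inordK //.
  by apply: truncn_scale_lt; case/andP: (w01 j).
exists c => // j _ /=; rewrite /box; case: ifPn => [ji|].
  by apply/(cellP _ _ _ N_gt0); rewrite cE //; case/andP: (w01 j).
rewrite negbK => /eqP ->; rewrite ffunE eqxx /= in_itv /= -ler_distl.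
apply: (@dist_pivot_le _ n z (fun j => w j t) (grid_point c) i M N%:R^-1) => //.
move=> k ki; rewrite /grid_point cE //.
by apply: dist_truncn_scale_le => //; case/andP: (w01 k).
Qed.

Lemma prob_box_le c j : (P (w j @^-1` box c j) <= (box_bound j (c j))%:E)%E.
Proof.
rewrite /box /box_bound; case: ifPn => [_|/negPn/eqP ->].
  by rewrite fine_probabilityK //; apply: measurable_funPTI; exact: measurable_itv.
case: ifPn => _; last by rewrite mul0r preimage_set0 measure0.
set ctr := pivot _ _ _; set L := M + _.
have ctr_le : ctr - L <= ctr + L by rewrite lerD2l lerNl ge0_cp // addr_ge0 ?divr_ge0.
rewrite mul1r; apply: le_trans (prob_itv_le _ _ _ ctr_le) _.
by rewrite lee_fin; lra.
Qed.

Lemma prod_sum_box_bound_le :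
  \prod_j \sum_t box_bound j t <= 2 * (M + n%:R / N%:R) * phi.
Proof.
have sum_i : \sum_t box_bound i t = 2 * (M + n%:R / N%:R) * phi.
  rewrite (bigD1 ord0) //= big1 => [|t /negbTE t0]; rewrite /box_bound eqxx /=.
    by rewrite mul1r addr0.
  by rewrite t0 mul0r.
rewrite (bigD1 i) //= sum_i -[leRHS]mulr1; apply: ler_wpM2l.
  by rewrite !mulr_ge0 ?addr_ge0 ?divr_ge0 // ltW.
apply: prodr_ile1 => j ji; rewrite /box_bound ji.
have mcell t : measurable (w j @^-1` cell N t).
  by apply: measurable_funPTI; exact: measurable_itv.
rewrite sumr_ge0 => [|t _]; last by rewrite fine_ge0 ?measure_ge0.
rewrite -lee_fin -sumEFin; under eq_bigr do rewrite fine_probabilityK //.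
by apply: sum_prob_trivIset_le1; [move=> t; exact: measurable_itv|exact: trivIset_cell].
Qed.

Lemma prob_comb_le_grid :
  (P (comb_le w z M) <= (2 * (M + n%:R / N%:R) * phi)%:E)%E.
Proof.
pose U := \bigcup_c \bigcap_j w j @^-1` box c j.
pose O := \bigcup_j w j @^-1` ~` `[0, 1]%classic.
have mU : measurable U.
  apply: fin_bigcup_measurable => // c _; apply: fin_bigcap_measurable => // j _.
  by apply: measurable_funPTI; exact: measurable_box.
have mO : measurable O.
  apply: fin_bigcup_measurable => // j _; apply: measurable_funPTI.
  by apply: measurableC; exact: measurable_itv.
have PUO : P (U `|` O) = P U := measureU0 mU mO prob_outside_unit_itv.
apply: (@le_trans _ _ (P (U `|` O))).
  exact: le_measure (mem_set (measurable_comb_le w z M))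
    (mem_set (measurableU _ _ mU mO)) comb_le_sub_boxes.
rewrite PUO.
apply: le_trans (prob_bigcup_boxes_le indep_w measurable_box prob_box_le) _.
by rewrite lee_fin prod_sum_box_bound_le.
Qed.

End discretization.

Lemma prob_comb_le (z : 'I_n -> R) (i : 'I_n) (M : R) :
  1 <= `|z i| -> (forall j, `|z j| <= 1) -> 0 <= M ->
  (P (comb_le w z M) <= (2 * M * phi)%:E)%E.
Proof.
move=> zi_ge1 z_le1 M_ge0; have mE := measurable_comb_le w z M.
rewrite -(fine_probabilityK mE) lee_fin.
apply: (@ler_of_add_div_nat _ _ _ (2 * n%:R * phi)) => N N_gt0.
have := @prob_comb_le_grid z i M N zi_ge1 z_le1 M_ge0 N_gt0.
by rewrite -(fine_probabilityK mE) lee_fin; lra.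
Qed.

Definition diff_event (M : R) (p : {ffun 'I_n -> bool} * {ffun 'I_n -> bool}) :
    set T :=
  if p.1 == p.2 then set0 else comb_le w (fun j => (p.1 j)%:R - (p.2 j)%:R) M.

Lemma measurable_diff_event M p : measurable (diff_event M p).
Proof.
by rewrite /diff_event; case: ifP => _; [exact: measurable0|exact: measurable_comb_le].
Qed.

Lemma prob_diff_event_le {M} p :
  0 <= M -> (P (diff_event M p) <= (2 * M * phi)%:E)%E.
Proof.
move=> M_ge0; rewrite /diff_event; case: eqVneq => [_|p12].
  by rewrite measure0 lee_fin !mulr_ge0 // ltW.
have [i pi] : exists i, p.1 i != p.2 i.
  apply/existsP; apply: contraR p12 => /existsPn p12E.
  by apply/eqP/ffunP => j; apply/eqP/negbNE.
apply: (prob_comb_le _ i) => // [|j]; last exact: norm_natrb_sub_le1.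
by rewrite norm_natrb_sub_neq.
Qed.

Lemma event_F_bigcup (k : nat) :
  event_F k (fun j => w j : T -> R) = \bigcup_p diff_event (n%:R / k%:R) p.
Proof.
apply/seteqP; split=> [t [x [y [xy small]]]|t [p _]].
  exists ([ffun j => x j], [ffun j => y j]) => //; rewrite /diff_event /=.
  case: eqP => [/ffunP xyE|_].
    by apply: xy; apply/funext => j; have := xyE j; rewrite !ffunE.
  rewrite /comb_le /=; under eq_bigr do rewrite !ffunE.
  by move: small; rewrite dotbB.
rewrite /diff_event; case: eqVneq => // p12 comb_t; exists p.1, p.2; split.
  by move=> p12E; move/eqP: p12; apply; apply/ffunP => j; rewrite p12E.
by rewrite dotbB.
Qed.

Lemma prob_event_F_le (k : nat) : (0 < k)%N ->
  (P (event_F k (fun j => w j : T -> R)) <=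
    (2 ^+ (2 * n + 1) * n%:R * phi / k%:R)%:E)%E.
Proof.
move=> k_gt0; have M_ge0 : 0 <= n%:R / k%:R :> R by rewrite divr_ge0.
have mU : measurable (\bigcup_p diff_event (n%:R / k%:R) p).
  by apply: fin_bigcup_measurable => // p _; exact: measurable_diff_event.
rewrite event_F_bigcup.
apply: le_trans
  (measure_le_sum_cover _ _ _ mU (measurable_diff_event _) (@subset_refl _ _)) _.
apply: le_trans (lee_sum _ (fun p _ => prob_diff_event_le p M_ge0)) _.
rewrite sumEFin sumr_const card_prod card_ffun card_bool card_ord lee_fin.
rewrite -[X in X <= _]mulr_natr natrM natrX addn1 exprS mul2n -addnn exprD.
lra.
Qed.

End anti_concentration.

End probability.

Theorem lemma2p3 (R : realType) (d : measure_display) (T : measurableType d)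
    (P : probability T R) (n : nat) (phi : R) (w : 'I_n -> {RV P >-> R})
    (a : 'I_n -> R) :
  1 <= phi ->
  (forall i, 0 <= a i /\ a i + phi^-1 <= 1) ->
  mutually_independent P (fun i => w i : T -> R) ->
  (forall i, uniform_on P (w i) (a i) (a i + phi^-1)) ->
  forall k : nat, (0 < k)%N ->
    (P (event_F k (fun i => w i : T -> R))
      <= ((2 ^+ (2 * n + 1) * n%:R * phi / k%:R : R)%:E))%E.
Proof.
move=> phi_ge1 supp_w indep_w unif_w.
exact: prob_event_F_le (lt_le_trans ltr01 phi_ge1) supp_w indep_w unif_w.
Qed.
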